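(* Let $\triangle ABC$ have side lengths $a=|BC|>b=|CA|>c=|AB|$ and angles $\alpha=\angle A$, $\beta=\angle B$, $\gamma=\angle C$, and suppose $60^\circ<\beta<90^\circ<\alpha$. For $x\in\{a,b,c\}$ let $W_x$ denote the largest area of an equilateral triangle contained in the closed triangle $\triangle ABC$ having one of its sides lying on side $x$. Then the maximum of $W_a,W_b,W_c$ is attained on the long side $a$, and the minimum is attained: (i) on the middle side $b$ when $\alpha/2+\beta<120^\circ$, and on both the short side $c$ and the middle side $b$ when $\alpha/2+\beta=120^\circ$; (ii) on the short side $c$ when $\alpha/2+\beta>120^\circ$.
   Context: An equilateral triangle of largest area contained in $\triangle ABC$ with one side lying on a given side of $\triangle ABC$ is called the wedged equilateral triangle (WET) on that side; it need not have all three vertices on the boundary of $\triangle ABC$. The max (resp. min) WET is the one of largest (resp. smallest) area among the three sides. *)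

From Stdlib Require Import Reals Lra.
Open Scope R_scope.

Definition point := (R * R)%type.

Definition pdist (P Q : point) : R :=
  sqrt ((fst P - fst Q)^2 + (snd P - snd Q)^2).

Definition cross (P Q S : point) : R :=
  (fst Q - fst P) * (snd S - snd P) - (snd Q - snd P) * (fst S - fst P).

Definition tri_area (P Q S : point) : R := Rabs (cross P Q S) / 2.

Definition angle (P Q S : point) : R :=
  acos (((fst Q - fst P) * (fst S - fst P) + (snd Q - snd P) * (snd S - snd P))
        / (pdist P Q * pdist P S)).

Definition on_segment (P Q X : point) : Prop :=
  exists t, 0 <= t <= 1 /\
    X = ((1 - t) * fst P + t * fst Q, (1 - t) * snd P + t * snd Q).

Definition in_triangle (P Q S X : point) : Prop :=
  exists u v w, 0 <= u /\ 0 <= v /\ 0 <= w /\ u + v + w = 1 /\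
    X = (u * fst P + v * fst Q + w * fst S, u * snd P + v * snd Q + w * snd S).

Definition equilateral (P Q S : point) : Prop :=
  0 < pdist P Q /\ pdist P Q = pdist Q S /\ pdist Q S = pdist S P.

Definition wedged_areas (A B C X Y : point) (r : R) : Prop :=
  exists P Q S : point,
    equilateral P Q S /\
    (forall Z, in_triangle P Q S Z -> in_triangle A B C Z) /\
    (forall Z, on_segment P Q Z -> on_segment X Y Z) /\
    r = tri_area P Q S.

(* An equilateral triangle whose base lies on [CA] and whose apex lies in ABC has its apex on
   A's side of line BC; projecting the apex on CA and on the normal to CA turns this into
   |base| <= lambda |CA| with lambda = sin C / sin (C + 60°), with equality for the triangle
   having a vertex at A and its apex on CB.  So W_b is the area of side lambda b, the same
   construction on BC gives W_a >= area of side lambda a, and since the angles at A and B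
   are at least 60° the whole equilateral triangle on AB fits, so W_c is the area of side c.
   By the law of sines lambda a = c sin A / sin (C + 60°) and lambda b = c sin B / sin (C + 60°);
   as A = 180° - B - C, everything reduces to comparing C + 60° with B, i.e. A/2 + B with 120°. *)

From Stdlib Require Import Reals Lra Psatz.
Open Scope R_scope.

(** * Planar vector algebra *)

Definition dist2 (P Q : point) : R := (fst P - fst Q) ^ 2 + (snd P - snd Q) ^ 2.

Definition dot (P Q S : point) : R :=
  (fst Q - fst P) * (fst S - fst P) + (snd Q - snd P) * (snd S - snd P).

Lemma dist2_sym P Q : dist2 P Q = dist2 Q P.
Proof. unfold dist2; ring. Qed.

Lemma dist2_ge0 P Q : 0 <= dist2 P Q.
Proof.
  unfold dist2; pose proof (pow2_ge_0 (fst P - fst Q)); pose proof (pow2_ge_0 (snd P - snd Q)).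
  lra.
Qed.

Lemma pdist_dist2 P Q : pdist P Q = sqrt (dist2 P Q).
Proof. reflexivity. Qed.

Lemma pdist_sym P Q : pdist P Q = pdist Q P.
Proof. rewrite !pdist_dist2, dist2_sym; reflexivity. Qed.

Lemma pdist_pow2 P Q : pdist P Q ^ 2 = dist2 P Q.
Proof. apply pow2_sqrt, dist2_ge0. Qed.

Lemma cross_cycle P Q S : cross Q S P = cross P Q S.
Proof. unfold cross; ring. Qed.

Lemma cross_swap P Q S : cross P S Q = - cross P Q S.
Proof. unfold cross; ring. Qed.

Lemma dot_sym P Q S : dot P S Q = dot P Q S.
Proof. unfold dot; ring. Qed.

Lemma dot_cross_lagrange P Q S :
  dot P Q S ^ 2 + cross P Q S ^ 2 = dist2 P Q * dist2 P S.
Proof. unfold dot, cross, dist2; ring. Qed.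

Lemma dist2_law_of_cosines P Q S :
  dist2 Q S = dist2 P Q + dist2 P S - 2 * dot P Q S.
Proof. unfold dot, dist2; ring. Qed.

Lemma dist2_pos_of_cross P Q S : cross P Q S <> 0 -> 0 < dist2 P Q.
Proof.
  intros H; pose proof (dot_cross_lagrange P Q S) as L.
  destruct (dist2_ge0 P Q) as [|E]; [assumption|].
  rewrite <- E, Rmult_0_l in L; exfalso; apply H; nra.
Qed.

Lemma pdist_pos_of_cross P Q S : cross P Q S <> 0 -> 0 < pdist P Q.
Proof. intros H; apply sqrt_lt_R0, (dist2_pos_of_cross _ _ S H). Qed.

Lemma point_in_frame P Q S : 0 < dist2 P Q ->
  S = (fst P + (dot P Q S * (fst Q - fst P) - cross P Q S * (snd Q - snd P)) / dist2 P Q,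
       snd P + (dot P Q S * (snd Q - snd P) + cross P Q S * (fst Q - fst P)) / dist2 P Q).
Proof.
  intros Hd; destruct P as [p1 p2], Q as [q1 q2], S as [s1 s2].
  unfold dot, cross, dist2 in *; simpl in *; f_equal; field; lra.
Qed.

(** * Equilateral triangles *)

Definition apex (P Q : point) (k : R) : point :=
  ((fst P + fst Q) / 2 - k * (snd Q - snd P), (snd P + snd Q) / 2 + k * (fst Q - fst P)).

Lemma cross_apex P Q k : cross P Q (apex P Q k) = k * dist2 P Q.
Proof. unfold cross, apex, dist2; simpl; field. Qed.

Lemma dist2_apex P Q k :
  dist2 Q (apex P Q k) = (1/4 + k ^ 2) * dist2 P Q /\
  dist2 (apex P Q k) P = (1/4 + k ^ 2) * dist2 P Q.
Proof. unfold apex, dist2; simpl; split; field. Qed.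

Lemma equilateral_dist2 P Q S : equilateral P Q S ->
  dist2 Q S = dist2 P Q /\ dist2 S P = dist2 P Q /\ 0 < dist2 P Q.
Proof.
  intros [Hpos [E1 E2]]; rewrite !pdist_dist2 in *.
  assert (F1 : dist2 P Q = dist2 Q S) by (apply sqrt_inj; auto using dist2_ge0).
  assert (F2 : dist2 Q S = dist2 S P) by (apply sqrt_inj; auto using dist2_ge0).
  repeat split; try congruence.
  destruct (dist2_ge0 P Q) as [|E]; [assumption|].
  rewrite <- E, sqrt_0 in Hpos; lra.
Qed.

Lemma apex_equilateral P Q k :
  0 < dist2 P Q -> k ^ 2 = 3/4 -> equilateral P Q (apex P Q k).
Proof.
  intros Hd Hk; destruct (dist2_apex P Q k) as [E1 E2].
  rewrite Hk in E1, E2; replace (1/4 + 3/4) with 1 in E1, E2 by field.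
  unfold equilateral; rewrite !pdist_dist2, E1, E2, !Rmult_1_l.
  split; [apply sqrt_lt_R0 | split]; auto.
Qed.

Lemma equilateral_apex P Q S : equilateral P Q S ->
  exists k, k ^ 2 = 3/4 /\ S = apex P Q k.
Proof.
  intros H; destruct (equilateral_dist2 _ _ _ H) as [E1 [E2 Hd]].
  pose proof (dist2_law_of_cosines P Q S) as Ec.
  pose proof (dot_cross_lagrange P Q S) as L.
  rewrite (dist2_sym P S), E1, E2 in *.
  assert (Edot : dot P Q S = dist2 P Q / 2) by lra.
  exists (cross P Q S / dist2 P Q); split.
  - assert (Hc : cross P Q S ^ 2 = 3/4 * dist2 P Q ^ 2) by (rewrite Edot in L; lra).
    replace ((cross P Q S / dist2 P Q) ^ 2) with (cross P Q S ^ 2 / dist2 P Q ^ 2)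
      by (field; lra).
    rewrite Hc; field; lra.
  - rewrite (point_in_frame P Q S Hd) at 1; rewrite Edot; unfold apex; f_equal; field; lra.
Qed.

Lemma Rabs_eq_sqrt3_half k : k ^ 2 = 3/4 -> Rabs k = sqrt 3 / 2.
Proof.
  intros Hk; rewrite <- sqrt_Rsqr_abs, Rsqr_pow2, Hk, <- (sqrt_pow2 2) by lra.
  rewrite <- sqrt_div_alt by lra; f_equal; field.
Qed.

Lemma signed_sqrt3_half_pow2 D : D <> 0 -> (sqrt 3 * D / (2 * Rabs D)) ^ 2 = 3/4.
Proof.
  intros HD; assert (HX : Rabs D <> 0) by (apply Rabs_no_R0; auto).
  replace ((sqrt 3 * D / (2 * Rabs D)) ^ 2) with (sqrt 3 ^ 2 * D ^ 2 / (4 * Rabs D ^ 2))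
    by (field; auto).
  rewrite pow2_abs, pow2_sqrt by lra; field; auto.
Qed.

Definition equilateral_area (s : R) : R := sqrt 3 / 4 * s ^ 2.

Lemma equilateral_area_pdist P Q : equilateral_area (pdist P Q) = sqrt 3 / 4 * dist2 P Q.
Proof. unfold equilateral_area; rewrite pdist_pow2; reflexivity. Qed.

Lemma equilateral_area_lt x y : 0 <= x < y -> equilateral_area x < equilateral_area y.
Proof.
  intros H; unfold equilateral_area; apply Rmult_lt_compat_l.
  - pose proof (sqrt_lt_R0 3); lra.
  - nra.
Qed.

Lemma tri_area_equilateral P Q S :
  equilateral P Q S -> tri_area P Q S = equilateral_area (pdist P Q).
Proof.
  intros H; destruct (equilateral_apex _ _ _ H) as [k [Hk ->]].
  unfold tri_area; rewrite equilateral_area_pdist, cross_apex, Rabs_mult, Rabs_eq_sqrt3_half,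
    (Rabs_pos_eq (dist2 P Q)) by (auto using dist2_ge0); field.
Qed.

(** * Segments, triangles and wedged equilateral triangles *)

Lemma on_segment_start X Y : on_segment X Y X.
Proof. exists 0; split; [lra|]; destruct X, Y; simpl; f_equal; ring. Qed.

Lemma on_segment_end X Y : on_segment X Y Y.
Proof. exists 1; split; [lra|]; destruct X, Y; simpl; f_equal; ring. Qed.

Lemma on_segment_sym X Y Z : on_segment X Y Z -> on_segment Y X Z.
Proof. intros [t [Ht ->]]; exists (1 - t); split; [lra|]; simpl; f_equal; ring. Qed.

Lemma on_segment_convex X Y P Q Z :
  on_segment X Y P -> on_segment X Y Q -> on_segment P Q Z -> on_segment X Y Z.
Proof.
  intros [t1 [H1 ->]] [t2 [H2 ->]] [t [H ->]].
  exists ((1 - t) * t1 + t * t2); split; [nra|]; simpl; f_equal; ring.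
Qed.

Lemma in_triangle_vertices A B C :
  in_triangle A B C A /\ in_triangle A B C B /\ in_triangle A B C C.
Proof.
  repeat split; [exists 1, 0, 0 | exists 0, 1, 0 | exists 0, 0, 1];
    repeat split; try lra; destruct A, B, C; simpl; f_equal; ring.
Qed.

Lemma in_triangle_swap A B C Z : in_triangle A B C Z -> in_triangle B A C Z.
Proof.
  intros [u [v [w [Hu [Hv [Hw [Hs ->]]]]]]].
  exists v, u, w; repeat split; try lra; simpl; f_equal; ring.
Qed.

Lemma in_triangle_convex A B C P Q S Z :
  in_triangle A B C P -> in_triangle A B C Q -> in_triangle A B C S ->
  in_triangle P Q S Z -> in_triangle A B C Z.
Proof.
  intros [p1 [p2 [p3 [? [? [? [Hp ->]]]]]]] [q1 [q2 [q3 [? [? [? [Hq ->]]]]]]]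
         [s1 [s2 [s3 [? [? [? [Hs ->]]]]]]] [u [v [w [? [? [? [Huvw ->]]]]]]].
  exists (u * p1 + v * q1 + w * s1), (u * p2 + v * q2 + w * s2), (u * p3 + v * q3 + w * s3).
  repeat split; try nra; simpl; f_equal; ring.
Qed.

Lemma wedged_areas_intro A B C X Y P Q S :
  equilateral P Q S ->
  in_triangle A B C P -> in_triangle A B C Q -> in_triangle A B C S ->
  on_segment X Y P -> on_segment X Y Q ->
  wedged_areas A B C X Y (tri_area P Q S).
Proof.
  intros He HP HQ HS HXP HXQ; exists P, Q, S; split; [exact He | split; [|split]].
  - intros Z; apply in_triangle_convex; auto.
  - intros Z; apply on_segment_convex; auto.
  - reflexivity.
Qed.

Lemma wedged_areas_swap A B C X Y r :
  wedged_areas A B C X Y r -> wedged_areas B A C Y X r.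
Proof.
  intros [P [Q [S [He [Hin [Hseg ->]]]]]]; exists P, Q, S; split; [exact He | split; [|split]].
  - intros Z HZ; apply in_triangle_swap, Hin, HZ.
  - intros Z HZ; apply on_segment_sym, Hseg, HZ.
  - reflexivity.
Qed.

Lemma wedged_areas_le_side A B C X Y r :
  wedged_areas A B C X Y r -> r <= equilateral_area (pdist X Y).
Proof.
  intros [P [Q [S [He [_ [Hseg ->]]]]]].
  rewrite tri_area_equilateral, !equilateral_area_pdist by auto.
  destruct (Hseg P (on_segment_start P Q)) as [t1 [H1 HP]].
  destruct (Hseg Q (on_segment_end P Q)) as [t2 [H2 HQ]]; subst P Q.
  apply Rmult_le_compat_l; [pose proof (sqrt_pos 3); lra|].
  replace (dist2 _ _) with ((t2 - t1) ^ 2 * dist2 X Y) by (unfold dist2; simpl; ring).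
  assert ((t2 - t1) ^ 2 <= 1) by nra.
  pose proof (dist2_ge0 X Y); nra.
Qed.

(* With gamma the angle at C, this is sin gamma / sin (gamma + 60°): the side of the
   equilateral triangle with base on [CA] ending at A and apex on [CB], relative to |CA|. *)
Definition corner_ratio (C A B : point) : R :=
  2 * Rabs (cross C A B) / (Rabs (cross C A B) + sqrt 3 * dot C A B).

Lemma corner_ratio_sym C A B : corner_ratio C B A = corner_ratio C A B.
Proof. unfold corner_ratio; rewrite cross_swap, Rabs_Ropp, dot_sym; reflexivity. Qed.

Lemma corner_ratio_pos C A B : cross C A B <> 0 -> 0 <= dot C A B -> 0 < corner_ratio C A B.
Proof.
  intros HD HG; pose proof (Rabs_pos_lt _ HD); pose proof (Rmult_le_pos _ _ (sqrt_pos 3) HG).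
  apply Rdiv_lt_0_compat; lra.
Qed.

(* The base is [(1 - t1) C + t1 A, (1 - t2) C + t2 A], its apex is C + u (A - C) + v (B - C),
   D = cross C A B, G = dot C A B, b2 = |CA|^2, and the two equations are the cross and dot
   products of the apex with A - C.  The first gives v |D| = sqrt 3 / 2 |t2 - t1| b2; since the
   apex is on A's side of CB (u >= 0), the second gives sqrt 3 |t2 - t1| G <= (t1 + t2) |D|. *)
Lemma corner_base_bound t1 t2 u v k D G b2 :
  0 <= t1 <= 1 -> 0 <= t2 <= 1 -> 0 <= u -> 0 <= v -> 0 <= G -> D <> 0 -> 0 < b2 ->
  k ^ 2 = 3/4 ->
  k * (t2 - t1) * b2 = v * D ->
  (t1 + t2) / 2 * b2 = u * b2 + v * G ->
  Rabs (t2 - t1) <= 2 * Rabs D / (Rabs D + sqrt 3 * G).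
Proof.
  intros Ht1 Ht2 Hu Hv HG HD Hb2 Hk Ecross Edot.
  set (X := Rabs D); assert (HX : 0 < X) by (apply Rabs_pos_lt; auto).
  assert (HvX : v * X = sqrt 3 / 2 * Rabs (t2 - t1) * b2).
  { unfold X; rewrite <- (Rabs_pos_eq v), <- Rabs_mult, <- Ecross by lra.
    rewrite !Rabs_mult, Rabs_eq_sqrt3_half, (Rabs_pos_eq b2) by lra; ring. }
  assert (Hproj : sqrt 3 * Rabs (t2 - t1) * G <= (t1 + t2) * X).
  { assert (Hvg : v * G * X <= (t1 + t2) / 2 * b2 * X) by (apply Rmult_le_compat_r; nra).
    replace (v * G * X) with (G * (v * X)) in Hvg by ring; rewrite HvX in Hvg.
    apply (Rmult_le_reg_r (b2 / 2)); lra. }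
  assert (Hsum : t1 + t2 <= 2 - Rabs (t2 - t1)).
  { destruct (Rle_dec 0 (t2 - t1)); [rewrite Rabs_pos_eq | rewrite Rabs_left]; lra. }
  assert (HZ : 0 < X + sqrt 3 * G) by (pose proof (Rmult_le_pos _ _ (sqrt_pos 3) HG); lra).
  apply (Rmult_le_reg_r (X + sqrt 3 * G)); [lra|].
  replace (2 * X / (X + sqrt 3 * G) * (X + sqrt 3 * G)) with (2 * X) by (field; lra).
  pose proof (Rmult_le_compat_r X _ _ (Rlt_le _ _ HX) Hsum); lra.
Qed.

Lemma wedged_areas_le_corner A B C r :
  cross A B C <> 0 -> 0 <= dot C A B -> wedged_areas A B C C A r ->
  r <= equilateral_area (corner_ratio C A B * pdist C A).
Proof.
  intros HD HG [P [Q [S [He [Hin [Hseg ->]]]]]].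
  rewrite tri_area_equilateral, equilateral_area_pdist by auto; unfold equilateral_area.
  destruct (Hin S (proj2 (proj2 (in_triangle_vertices P Q S))))
    as [u [v [w [Hu [Hv [Hw [Huvw HS]]]]]]].
  destruct (equilateral_apex _ _ _ He) as [k [Hk ->]].
  destruct (Hseg P (on_segment_start P Q)) as [t1 [Ht1 HP]].
  destruct (Hseg Q (on_segment_end P Q)) as [t2 [Ht2 HQ]]; subst P Q.
  replace w with (1 - u - v) in HS by lra.
  rewrite (cross_cycle C A B) in HD.
  set (S := apex _ _ k) in HS |- *.
  assert (Ecross : k * (t2 - t1) * dist2 C A = v * cross C A B).
  { transitivity (cross C A S).
    - unfold S, cross, dist2, apex; simpl; field.
    - rewrite HS; unfold cross; simpl; ring. }
  assert (Edot : (t1 + t2) / 2 * dist2 C A = u * dist2 C A + v * dot C A B).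
  { transitivity (dot C A S).
    - unfold S, dot, dist2, apex; simpl; field.
    - rewrite HS; unfold dot, dist2; simpl; ring. }
  pose proof (dist2_pos_of_cross _ _ _ HD) as Hb2.
  pose proof (corner_base_bound _ _ _ _ _ _ _ _ Ht1 Ht2 Hu Hv HG HD Hb2 Hk Ecross Edot) as Hle.
  replace (dist2 _ _) with ((t2 - t1) ^ 2 * dist2 C A) by (unfold dist2; simpl; ring).
  rewrite Rpow_mult_distr, pdist_pow2.
  apply Rmult_le_compat_l; [pose proof (sqrt_pos 3); lra|].
  apply Rmult_le_compat_r; [lra|].
  rewrite <- pow2_abs; apply pow_incr; split; [apply Rabs_pos | exact Hle].
Qed.

(* [sqrt 3 * dot P Q S <= Rabs (cross P Q S)] says that the angle at P is at least 60°, and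
   the reverse inequality that it is at most 60° (see [sqrt3_dot_le_of_angle_ge_PI3]).  In the
   constructions below the apex coefficient [k] has the sign of [cross A B C], which puts the
   apex on the same side of the base as the triangle. *)
Lemma wedged_areas_corner A B C :
  cross A B C <> 0 ->
  sqrt 3 * dot A B C <= Rabs (cross A B C) ->
  Rabs (cross A B C) <= sqrt 3 * dot C A B ->
  wedged_areas A B C C A (equilateral_area (corner_ratio C A B * pdist C A)).
Proof.
  intros HD HA HC.
  pose proof (sqrt_pos 3) as Hr.
  assert (Hb2 : 0 < dist2 C A) by (apply (dist2_pos_of_cross _ _ B); rewrite <- cross_cycle; auto).
  assert (HX : 0 < Rabs (cross A B C)) by (apply Rabs_pos_lt; auto).
  set (X := Rabs (cross A B C)) in *.
  set (Z := X + sqrt 3 * dot C A B).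
  assert (HZ : 0 < Z) by (unfold Z; lra).
  assert (Hl : corner_ratio C A B = 2 * X / Z)
    by (unfold corner_ratio, Z, X; rewrite <- cross_cycle; reflexivity).
  set (l := corner_ratio C A B) in *.
  assert (Hl1 : 0 < l <= 1).
  { rewrite Hl; split; [apply Rdiv_lt_0_compat; lra|].
    apply (Rmult_le_reg_r Z); [lra|].
    replace (2 * X / Z * Z) with (2 * X) by (field; lra); unfold Z; lra. }
  set (mu := sqrt 3 * dist2 C A / Z).
  assert (Hmu : 0 <= mu <= 1).
  { split; [apply Rmult_le_pos; [apply Rmult_le_pos | apply Rlt_le, Rinv_0_lt_compat]; lra|].
    apply (Rmult_le_reg_r Z); [lra|].
    replace (mu * Z) with (sqrt 3 * dist2 C A) by (unfold mu; field; lra).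
    replace (dist2 C A) with (dot A B C + dot C A B) by (unfold dist2, dot; ring).
    unfold Z; lra. }
  set (P := (l * fst C + (1 - l) * fst A, l * snd C + (1 - l) * snd A)).
  set (k := sqrt 3 * cross A B C / (2 * X)).
  assert (HPA : dist2 P A = l ^ 2 * dist2 C A) by (unfold P, dist2; simpl; ring).
  assert (He : equilateral P A (apex P A k)).
  { apply apex_equilateral; [rewrite HPA; apply Rmult_lt_0_compat; [apply pow_lt|]; lra|].
    apply signed_sqrt3_half_pow2; auto. }
  replace (equilateral_area (l * pdist C A)) with (tri_area P A (apex P A k))
    by (rewrite tri_area_equilateral, equilateral_area_pdist, HPA by auto;
        unfold equilateral_area; rewrite Rpow_mult_distr, pdist_pow2; ring).
  apply wedged_areas_intro; auto.
  - exists (1 - l), 0, l; repeat split; try lra; unfold P; simpl; f_equal; ring.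
  - apply in_triangle_vertices.
  - exists 0, mu, (1 - mu); repeat split; try lra.
    unfold P, k, mu, apex; rewrite Hl; unfold Z, X in *.
    destruct A as [xa ya], B as [xb yb], C as [xc yc].
    unfold dist2, dot, cross in *; simpl in *; f_equal; field; lra.
  - exists (1 - l); split; [lra|]; unfold P; simpl; f_equal; ring.
  - apply on_segment_end.
Qed.

Lemma wedged_areas_corner_mirror A B C :
  cross A B C <> 0 ->
  sqrt 3 * dot B C A <= Rabs (cross A B C) ->
  Rabs (cross A B C) <= sqrt 3 * dot C A B ->
  wedged_areas A B C B C (equilateral_area (corner_ratio C A B * pdist B C)).
Proof.
  intros HD HB HC.
  assert (Eswap : cross B A C = - cross A B C) by (unfold cross; ring).
  apply (wedged_areas_swap B A C C B).
  rewrite <- corner_ratio_sym, (pdist_sym B C).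
  apply wedged_areas_corner; rewrite ?Eswap, ?Rabs_Ropp.
  - intros H; apply HD; lra.
  - rewrite dot_sym; exact HB.
  - rewrite dot_sym; exact HC.
Qed.

Lemma wedged_areas_full A B C :
  cross A B C <> 0 ->
  sqrt 3 * dot A B C <= Rabs (cross A B C) ->
  sqrt 3 * dot B C A <= Rabs (cross A B C) ->
  wedged_areas A B C A B (equilateral_area (pdist A B)).
Proof.
  intros HD HA HB.
  pose proof (sqrt_pos 3) as Hr.
  assert (Hc2 : 0 < dist2 A B) by (apply (dist2_pos_of_cross _ _ C); auto).
  assert (HX : 0 < Rabs (cross A B C)) by (apply Rabs_pos_lt; auto).
  set (X := Rabs (cross A B C)) in *.
  set (k := sqrt 3 * cross A B C / (2 * X)).
  assert (He : equilateral A B (apex A B k)).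
  { apply apex_equilateral; auto; apply signed_sqrt3_half_pow2; auto. }
  rewrite <- (tri_area_equilateral _ _ _ He).
  apply wedged_areas_intro; auto using on_segment_start, on_segment_end;
    try apply in_triangle_vertices.
  set (u := 1/2 - sqrt 3 * dot B C A / (2 * X)).
  set (v := 1/2 - sqrt 3 * dot A B C / (2 * X)).
  assert (Hsum : dot A B C + dot B C A = dist2 A B) by (unfold dot, dist2; ring).
  exists u, v, (1 - u - v); repeat split; try lra.
  - apply (Rmult_le_reg_r (2 * X)); [lra|]; unfold u; field_simplify; lra.
  - apply (Rmult_le_reg_r (2 * X)); [lra|]; unfold v; field_simplify; lra.
  - apply (Rmult_le_reg_r (2 * X)); [lra|]; unfold u, v; field_simplify; nra.
  - unfold k, u, v, apex, X in *; destruct A as [xa ya], B as [xb yb], C as [xc yc].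
    unfold dist2, dot, cross in *; simpl in *; f_equal; field; lra.
Qed.

Lemma is_lub_ge (E : R -> Prop) m x : is_lub E m -> E x -> x <= m.
Proof. intros [Hub _] Hx; exact (Hub x Hx). Qed.

Lemma is_lub_eq_max (E : R -> Prop) m x :
  is_lub E m -> E x -> (forall r, E r -> r <= x) -> m = x.
Proof.
  intros [Hub Hleast] Hx Hmax; apply Rle_antisym.
  - apply Hleast; intros r; apply Hmax.
  - exact (Hub x Hx).
Qed.

(** * Angles *)

Lemma angle_bound P Q S : 0 <= angle P Q S <= PI.
Proof. apply acos_bound. Qed.

Lemma dot_cross_normalized P Q S : cross P Q S <> 0 ->
  0 < pdist P Q * pdist P S /\
  (dot P Q S / (pdist P Q * pdist P S)) ^ 2 + (cross P Q S / (pdist P Q * pdist P S)) ^ 2 = 1.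
Proof.
  intros H.
  assert (HS : cross P S Q <> 0) by (rewrite cross_swap; lra).
  pose proof (pdist_pos_of_cross _ _ _ H); pose proof (pdist_pos_of_cross _ _ _ HS).
  assert (Hn : (pdist P Q * pdist P S) ^ 2 = dot P Q S ^ 2 + cross P Q S ^ 2)
    by (rewrite Rpow_mult_distr, !pdist_pow2, dot_cross_lagrange; reflexivity).
  split; [nra|].
  replace 1 with ((pdist P Q * pdist P S) ^ 2 / (pdist P Q * pdist P S) ^ 2) by (field; lra).
  rewrite Hn at 1; field; lra.
Qed.

Lemma cos_angle P Q S : cross P Q S <> 0 ->
  cos (angle P Q S) = dot P Q S / (pdist P Q * pdist P S).
Proof.
  intros H; destruct (dot_cross_normalized _ _ _ H) as [_ Hu].
  apply cos_acos; pose proof (pow2_ge_0 (cross P Q S / (pdist P Q * pdist P S))); nra.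
Qed.

Lemma sin_angle P Q S : cross P Q S <> 0 ->
  sin (angle P Q S) = Rabs (cross P Q S) / (pdist P Q * pdist P S).
Proof.
  intros H; destruct (dot_cross_normalized _ _ _ H) as [Hn Hu].
  unfold angle; fold (dot P Q S); rewrite sin_acos
    by (pose proof (pow2_ge_0 (cross P Q S / (pdist P Q * pdist P S))); nra).
  replace (1 - _) with ((cross P Q S / (pdist P Q * pdist P S)) ^ 2) by (unfold Rsqr; lra).
  rewrite <- pow2_abs, sqrt_pow2 by apply Rabs_pos.
  unfold Rdiv; rewrite Rabs_mult, Rabs_inv, (Rabs_pos_eq (_ * _)); lra.
Qed.

Lemma sqrt3_cos_sub_sin x : sqrt 3 * cos x - sin x = 2 * sin (PI / 3 - x).
Proof. rewrite sin_minus, sin_PI3, cos_PI3; field. Qed.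

Lemma sqrt3_dot_le_of_angle_ge_PI3 P Q S : cross P Q S <> 0 ->
  PI / 3 <= angle P Q S -> sqrt 3 * dot P Q S <= Rabs (cross P Q S).
Proof.
  intros H Hge; destruct (dot_cross_normalized _ _ _ H) as [Hn _].
  pose proof (angle_bound P Q S).
  assert (Hs : 0 <= sin (angle P Q S - PI / 3)) by (apply sin_ge_0; lra).
  replace (angle P Q S - PI / 3) with (- (PI / 3 - angle P Q S)) in Hs by ring.
  rewrite sin_neg in Hs.
  pose proof (sqrt3_cos_sub_sin (angle P Q S)) as E.
  rewrite cos_angle, sin_angle in E by auto.
  apply (Rmult_le_reg_r (/ (pdist P Q * pdist P S))); [apply Rinv_0_lt_compat; lra|].
  unfold Rdiv in E; lra.
Qed.

Lemma cross_le_sqrt3_dot_of_angle_le_PI3 P Q S : cross P Q S <> 0 ->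
  angle P Q S <= PI / 3 -> Rabs (cross P Q S) <= sqrt 3 * dot P Q S.
Proof.
  intros H Hle; destruct (dot_cross_normalized _ _ _ H) as [Hn _].
  pose proof (angle_bound P Q S).
  assert (Hs : 0 <= sin (PI / 3 - angle P Q S)) by (apply sin_ge_0; lra).
  pose proof (sqrt3_cos_sub_sin (angle P Q S)) as E.
  rewrite cos_angle, sin_angle in E by auto.
  apply (Rmult_le_reg_r (/ (pdist P Q * pdist P S))); [apply Rinv_0_lt_compat; lra|].
  unfold Rdiv in E; lra.
Qed.

Lemma dot_nonneg_of_angle_le_PI2 P Q S : cross P Q S <> 0 ->
  angle P Q S <= PI / 2 -> 0 <= dot P Q S.
Proof.
  intros H Hle; destruct (dot_cross_normalized _ _ _ H) as [Hn _].
  pose proof (angle_bound P Q S).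
  assert (Hc : 0 <= cos (angle P Q S)) by (apply cos_ge_0; lra).
  rewrite cos_angle in Hc by auto.
  set (n := pdist P Q * pdist P S) in *.
  replace (dot P Q S) with (dot P Q S / n * n) by (field; lra).
  apply Rmult_le_pos; lra.
Qed.

Lemma eq_PI_sub_of_sin_cos x y :
  0 <= x <= 2 * PI -> 0 <= y <= PI -> 0 < sin y ->
  sin x = sin y -> cos x = - cos y -> x = PI - y.
Proof.
  intros Hx Hy Hs Es Ec.
  destruct (Rle_dec x PI) as [Hle|Hgt].
  - apply cos_inj; [lra | lra | rewrite Rtrigo_facts.cos_pi_minus; exact Ec].
  - pose proof (sin_le_0 x); lra.
Qed.

Section TriangleTrigonometry.

Variables A B C : point.
Hypothesis nondegenerate : cross A B C <> 0.

Let nondegenerate_B : cross B C A <> 0.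
Proof. rewrite cross_cycle; exact nondegenerate. Qed.

Let nondegenerate_C : cross C A B <> 0.
Proof. rewrite <- cross_cycle; exact nondegenerate. Qed.

Let a_pos : 0 < pdist B C.
Proof. exact (pdist_pos_of_cross _ _ _ nondegenerate_B). Qed.

Let b_pos : 0 < pdist C A.
Proof. exact (pdist_pos_of_cross _ _ _ nondegenerate_C). Qed.

Let c_pos : 0 < pdist A B.
Proof. exact (pdist_pos_of_cross _ _ _ nondegenerate). Qed.

Let X_pos : 0 < Rabs (cross A B C).
Proof. apply Rabs_pos_lt, nondegenerate. Qed.

Lemma cos_angle_A : cos (angle A B C) = dot A B C / (pdist A B * pdist C A).
Proof. rewrite cos_angle, (pdist_sym A C); auto. Qed.

Lemma sin_angle_A : sin (angle A B C) = Rabs (cross A B C) / (pdist A B * pdist C A).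
Proof. rewrite sin_angle, (pdist_sym A C); auto. Qed.

Lemma cos_angle_B : cos (angle B C A) = dot B C A / (pdist B C * pdist A B).
Proof. rewrite cos_angle, (pdist_sym B A); auto. Qed.

Lemma sin_angle_B : sin (angle B C A) = Rabs (cross A B C) / (pdist B C * pdist A B).
Proof. rewrite sin_angle, (pdist_sym B A), cross_cycle; auto. Qed.

Lemma cos_angle_C : cos (angle C A B) = dot C A B / (pdist C A * pdist B C).
Proof. rewrite cos_angle, (pdist_sym C B); auto. Qed.

Lemma sin_angle_C : sin (angle C A B) = Rabs (cross A B C) / (pdist C A * pdist B C).
Proof. rewrite sin_angle, (pdist_sym C B), <- cross_cycle; auto. Qed.

Lemma angle_sum : angle A B C + angle B C A + angle C A B = PI.
Proof.
  assert (Hc2 : dot A B C + dot B C A = pdist A B ^ 2)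
    by (rewrite pdist_pow2; unfold dot, dist2; ring).
  assert (Hprod : dot A B C * dot B C A - Rabs (cross A B C) ^ 2 = - dot C A B * pdist A B ^ 2)
    by (rewrite pow2_abs, pdist_pow2; unfold dot, cross, dist2; ring).
  enough (angle A B C + angle B C A = PI - angle C A B) by lra.
  pose proof (angle_bound A B C); pose proof (angle_bound B C A); pose proof (angle_bound C A B).
  apply eq_PI_sub_of_sin_cos; try lra.
  - rewrite sin_angle_C; apply Rdiv_lt_0_compat; nra.
  - rewrite sin_plus, sin_angle_A, cos_angle_B, cos_angle_A, sin_angle_B, sin_angle_C.
    replace (dot B C A) with (pdist A B ^ 2 - dot A B C) by lra; field; lra.
  - rewrite cos_plus, sin_angle_A, cos_angle_B, cos_angle_A, sin_angle_B, cos_angle_C.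
    apply (Rmult_eq_reg_r (pdist A B ^ 2)); [|nra].
    replace (- (dot C A B / (pdist C A * pdist B C)) * pdist A B ^ 2)
      with ((dot A B C * dot B C A - Rabs (cross A B C) ^ 2) / (pdist C A * pdist B C))
      by (rewrite Hprod; field; lra).
    field; lra.
Qed.

Lemma corner_ratio_mul_BC : 0 <= dot C A B ->
  corner_ratio C A B * pdist B C * sin (angle C A B + PI / 3) = pdist A B * sin (angle A B C).
Proof.
  intros HG; pose proof (Rmult_le_pos _ _ (sqrt_pos 3) HG).
  unfold corner_ratio; rewrite <- cross_cycle.
  rewrite sin_plus, sin_PI3, cos_PI3, sin_angle_C, cos_angle_C, sin_angle_A.
  field; repeat split; lra.
Qed.

Lemma corner_ratio_mul_CA : 0 <= dot C A B ->
  corner_ratio C A B * pdist C A * sin (angle C A B + PI / 3) = pdist A B * sin (angle B C A).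
Proof.
  intros HG; pose proof (Rmult_le_pos _ _ (sqrt_pos 3) HG).
  unfold corner_ratio; rewrite <- cross_cycle.
  rewrite sin_plus, sin_PI3, cos_PI3, sin_angle_C, cos_angle_C, sin_angle_B.
  field; repeat split; lra.
Qed.

End TriangleTrigonometry.

Lemma wedged_lubs A B C Wa Wb Wc :
  cross A B C <> 0 ->
  PI / 3 <= angle A B C -> PI / 3 <= angle B C A -> angle C A B <= PI / 3 ->
  is_lub (wedged_areas A B C B C) Wa ->
  is_lub (wedged_areas A B C C A) Wb ->
  is_lub (wedged_areas A B C A B) Wc ->
  equilateral_area (corner_ratio C A B * pdist B C) <= Wa /\
  Wb = equilateral_area (corner_ratio C A B * pdist C A) /\
  Wc = equilateral_area (pdist A B).
Proof.
  intros HD Ha Hb Hc HWa HWb HWc.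
  assert (HDB : cross B C A <> 0) by (rewrite (cross_cycle A B C); exact HD).
  assert (HDC : cross C A B <> 0) by (rewrite <- (cross_cycle C A B); exact HD).
  pose proof (sqrt3_dot_le_of_angle_ge_PI3 _ _ _ HD Ha) as HA.
  pose proof (sqrt3_dot_le_of_angle_ge_PI3 _ _ _ HDB Hb) as HB.
  pose proof (cross_le_sqrt3_dot_of_angle_le_PI3 _ _ _ HDC Hc) as HC.
  rewrite (cross_cycle A B C) in HB; rewrite <- (cross_cycle C A B) in HC.
  assert (HG : 0 <= dot C A B)
    by (apply dot_nonneg_of_angle_le_PI2; [exact HDC | pose proof PI_RGT_0; lra]).
  split; [|split].
  - apply (is_lub_ge _ _ _ HWa), wedged_areas_corner_mirror; auto.
  - apply (is_lub_eq_max _ _ _ HWb);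
      [apply wedged_areas_corner | intros r; apply wedged_areas_le_corner]; auto.
  - apply (is_lub_eq_max _ _ _ HWc);
      [apply wedged_areas_full | intros r; apply wedged_areas_le_side]; auto.
Qed.

Theorem mainTheorem4 (A B C : point) (Wa Wb Wc : R) :
  cross A B C <> 0 ->
  pdist B C > pdist C A -> pdist C A > pdist A B ->
  PI / 3 < angle B C A -> angle B C A < PI / 2 -> PI / 2 < angle A B C ->
  is_lub (wedged_areas A B C B C) Wa ->
  is_lub (wedged_areas A B C C A) Wb ->
  is_lub (wedged_areas A B C A B) Wc ->
  (Wb < Wa /\ Wc < Wa) /\
  (angle A B C / 2 + angle B C A < 2 * PI / 3 -> Wb < Wc) /\
  (angle A B C / 2 + angle B C A = 2 * PI / 3 -> Wb = Wc) /\
  (angle A B C / 2 + angle B C A > 2 * PI / 3 -> Wc < Wb).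
Proof.
  (* |CA| > |AB| already follows from the angle hypotheses. *)
  intros HD Hab _ Hb1 Hb2 Ha HWa HWb HWc.
  assert (HDC : cross C A B <> 0) by (rewrite <- cross_cycle; exact HD).
  pose proof (angle_sum A B C HD) as Hsum; pose proof (angle_bound C A B).
  assert (Hg : angle C A B <= PI / 3) by lra.
  pose proof (dot_nonneg_of_angle_le_PI2 _ _ _ HDC ltac:(lra)) as HG.
  destruct (wedged_lubs A B C Wa Wb Wc HD ltac:(lra) ltac:(lra) Hg HWa HWb HWc) as [EWa [-> ->]].
  pose proof (corner_ratio_mul_BC A B C HD HG) as Ea.
  pose proof (corner_ratio_mul_CA A B C HD HG) as Eb.
  pose proof (corner_ratio_pos _ _ _ HDC HG) as Hl.
  set (l := corner_ratio C A B) in *; set (s := sin (angle C A B + PI / 3)) in *.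
  assert (Hs : 0 < s) by (apply sin_gt_0; lra).
  assert (Hsa : s < sin (angle A B C)) by (rewrite <- sin_PI_x; apply sin_increasing_1; lra).
  assert (Hsb : 0 < sin (angle B C A)) by (apply sin_gt_0; lra).
  pose proof (pdist_pos_of_cross _ _ _ HD) as Hc; pose proof (pdist_pos_of_cross _ _ _ HDC) as Hb.
  assert (Hca : pdist A B < l * pdist B C) by nra.
  split; [split | split; [|split]]; intros.
  - eapply Rlt_le_trans; [apply equilateral_area_lt; split | exact EWa]; [nra|].
    apply Rmult_lt_compat_l; lra.
  - eapply Rlt_le_trans; [apply equilateral_area_lt; split | exact EWa]; lra.
  - assert (sin (angle B C A) < s) by (apply sin_increasing_1; lra).
    apply equilateral_area_lt; split; nra.
  - assert (Eb_s : sin (angle B C A) = s) by (unfold s; f_equal; lra).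
    f_equal; apply (Rmult_eq_reg_r s); [rewrite Eb, Eb_s; reflexivity | lra].
  - assert (s < sin (angle B C A)) by (apply sin_increasing_1; lra).
    apply equilateral_area_lt; split; nra.
Qed.
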